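(* Let $G$ be a finitely generated group, $N$ a characteristic subgroup of $G$, and $Q=G/N$. Then $\alpha_Q\preccurlyeq\alpha_G$.
   Context: For a finitely generated group $G$ with finite generating set $\Sigma$, the automorphic growth function sends $n$ to the number of $\operatorname{Aut}(G)$-orbits of $G$ containing an element of word length at most $n$; $\alpha_G$ denotes its class under $\sim$ (independent of $\Sigma$). For non-decreasing non-zero $f,g\colon\mathbb{N}\to\mathbb{N}$, $f\preccurlyeq g$ means there is $\lambda\in\mathbb{N}\setminus\{0\}$ with $f(n)\le\lambda g(\lambda n+\lambda)+\lambda$ for all $n$, and $f\sim g$ means both $f\preccurlyeq g$ and $g\preccurlyeq f$; $\preccurlyeq$ induces a partial order on $\sim$-classes. *)

From Stdlib Require Import List Arith ClassicalEpsilon.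
Import ListNotations.

Record Grp := {
  carrier :> Type;
  gmul : carrier -> carrier -> carrier;
  gone : carrier;
  ginv : carrier -> carrier;
  gmul_assoc : forall x y z, gmul x (gmul y z) = gmul (gmul x y) z;
  gmul_1l : forall x, gmul gone x = x;
  gmul_Vl : forall x, gmul (ginv x) x = gone
}.

Arguments gmul {g}.
Arguments gone {g}.
Arguments ginv {g}.

(* A word over S ∪ S^{-1}: letters (true, s) = s, (false, s) = s^{-1}. *)
Definition letter_val {G : Grp} (p : bool * G) : G :=
  if fst p then snd p else ginv (snd p).

Fixpoint word_val {G : Grp} (w : list (bool * G)) : G :=
  match w with
  | [] => gone
  | p :: w' => gmul (letter_val p) (word_val w')
  end.

Definition in_ball {G : Grp} (S : list G) (n : nat) (g : G) : Prop :=
  exists w : list (bool * G),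
    length w <= n /\ Forall (fun p => In (snd p) S) w /\ word_val w = g.

Definition generates {G : Grp} (S : list G) : Prop :=
  forall g : G, exists n, in_ball S n g.

Definition finitely_generated (G : Grp) : Prop :=
  exists S : list G, generates S.

Definition is_hom {G H : Grp} (f : G -> H) : Prop :=
  forall x y, f (gmul x y) = gmul (f x) (f y).

Definition is_aut {G : Grp} (f : G -> G) : Prop :=
  is_hom f /\ (forall x y, f x = f y -> x = y) /\ (forall y, exists x, f x = y).

Definition aut_equiv {G : Grp} (x y : G) : Prop :=
  exists f : G -> G, is_aut f /\ f x = y.

Definition orbit_reps {G : Grp} (S : list G) (n : nat) (l : list G) : Prop :=
  (forall x, In x l -> in_ball S n x) /\
  (forall i j, i < length l -> j < length l ->
     aut_equiv (nth i l gone) (nth j l gone) -> i = j) /\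
  (forall g, in_ball S n g -> exists x, In x l /\ aut_equiv g x).

Definition aut_growth {G : Grp} (S : list G) (n : nat) : nat :=
  epsilon (inhabits 0) (fun k => exists l, orbit_reps S n l /\ length l = k).

Definition dom_le (f g : nat -> nat) : Prop :=
  exists lam : nat, lam <> 0 /\
    forall n, f n <= lam * g (lam * n + lam) + lam.

Definition dom_equiv (f g : nat -> nat) : Prop := dom_le f g /\ dom_le g f.

Definition is_subgroup {G : Grp} (N : G -> Prop) : Prop :=
  N gone /\ (forall x y, N x -> N y -> N (gmul x y)) /\ (forall x, N x -> N (ginv x)).

Definition characteristic {G : Grp} (N : G -> Prop) : Prop :=
  is_subgroup N /\
  forall f : G -> G, is_aut f -> forall y, N y <-> exists x, N x /\ f x = y.

Definition is_quotient_map {G Q : Grp} (N : G -> Prop) (pi : G -> Q) : Prop :=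
  is_hom pi /\ (forall q, exists g, pi g = q) /\ (forall g, pi g = gone <-> N g).

(* An automorphism of G preserves the characteristic subgroup N, so it descends
   to an automorphism of Q = G/N; hence pi maps Aut(G)-orbits into Aut(Q)-orbits.
   Lifting each generator in T to an element of S-length at most c, the T-ball of
   radius n is the image under pi of the S-ball of radius c n.  Sending each
   Aut(Q)-orbit that meets the T-ball to an Aut(G)-orbit over it that meets the
   S-ball is injective, so alpha_Q(n) <= alpha_G(c n). *)

From Stdlib Require Import List Lia ClassicalEpsilon Classical.
Import ListNotations.

Section GroupFacts.
Variable G : Grp.

Lemma gmul_Vr (x : G) : gmul x (ginv x) = gone.
Proof.
  assert (idem : gmul (gmul x (ginv x)) (gmul x (ginv x)) = gmul x (ginv x)).
  { rewrite <- gmul_assoc, (gmul_assoc G (ginv x) x), gmul_Vl, gmul_1l. reflexivity. }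
  set (y := gmul x (ginv x)) in *.
  transitivity (gmul (ginv y) (gmul y y)).
  - rewrite gmul_assoc, gmul_Vl, gmul_1l. reflexivity.
  - rewrite idem. apply gmul_Vl.
Qed.

Lemma gmul_1r (x : G) : gmul x gone = x.
Proof. rewrite <- (gmul_Vl G x), gmul_assoc, gmul_Vr, gmul_1l. reflexivity. Qed.

Lemma ginv_unique (a b : G) : gmul a b = gone -> b = ginv a.
Proof.
  intro ab1.
  rewrite <- (gmul_1l G b), <- (gmul_Vl G a), <- gmul_assoc, ab1, gmul_1r.
  reflexivity.
Qed.

Lemma ginvK (x : G) : ginv (ginv x) = x.
Proof. symmetry. apply ginv_unique, gmul_Vl. Qed.

Lemma ginv_mul (x y : G) : ginv (gmul x y) = gmul (ginv y) (ginv x).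
Proof.
  symmetry. apply ginv_unique.
  rewrite gmul_assoc, <- (gmul_assoc G x y), gmul_Vr, gmul_1r, gmul_Vr. reflexivity.
Qed.

Lemma gmul_cancel_l (a x y : G) : gmul a x = gmul a y -> x = y.
Proof.
  intro axy.
  rewrite <- (gmul_1l G x), <- (gmul_1l G y), <- (gmul_Vl G a), <- !gmul_assoc, axy.
  reflexivity.
Qed.

Lemma gmul_Vl_eq1 (u v : G) : gmul (ginv u) v = gone <-> u = v.
Proof.
  split.
  - intro uv1. apply ginv_unique in uv1. rewrite ginvK in uv1. auto.
  - intros ->. apply gmul_Vl.
Qed.

Definition flip_letter (p : bool * G) : bool * G := (negb (fst p), snd p).

Lemma word_val_app (w1 w2 : list (bool * G)) :
  word_val (w1 ++ w2) = gmul (word_val w1) (word_val w2).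
Proof.
  induction w1 as [|p w1 IH]; simpl.
  - rewrite gmul_1l. reflexivity.
  - rewrite IH, gmul_assoc. reflexivity.
Qed.

Lemma word_val_rev_flip (w : list (bool * G)) :
  word_val (rev (map flip_letter w)) = ginv (word_val w).
Proof.
  induction w as [|[[|] s] w IH]; simpl.
  - apply ginv_unique, gmul_1l.
  - rewrite word_val_app, IH, ginv_mul. cbn. rewrite gmul_1r. reflexivity.
  - rewrite word_val_app, IH, ginv_mul. cbn. rewrite gmul_1r, ginvK. reflexivity.
Qed.

Lemma in_ball_one (S : list G) (n : nat) : in_ball S n gone.
Proof. exists []. repeat split; simpl; auto with arith. Qed.

Lemma in_ball_mono (S : list G) (n m : nat) (g : G) :
  n <= m -> in_ball S n g -> in_ball S m g.
Proof. intros nm [w [lw [Sw <-]]]. exists w. repeat split; auto. lia. Qed.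

Lemma in_ball_mul (S : list G) (n m : nat) (x y : G) :
  in_ball S n x -> in_ball S m y -> in_ball S (n + m) (gmul x y).
Proof.
  intros [w1 [l1 [S1 <-]]] [w2 [l2 [S2 <-]]]. exists (w1 ++ w2).
  rewrite length_app, word_val_app, Forall_app. repeat split; auto. lia.
Qed.

Lemma in_ball_inv (S : list G) (n : nat) (x : G) :
  in_ball S n x -> in_ball S n (ginv x).
Proof.
  intros [w [lw [Sw <-]]]. exists (rev (map flip_letter w)).
  rewrite length_rev, length_map, word_val_rev_flip. repeat split; auto.
  apply Forall_rev, Forall_map. exact Sw.
Qed.

Lemma aut_equiv_refl (x : G) : aut_equiv x x.
Proof. exists (fun y => y). repeat split; eauto. Qed.

Lemma aut_equiv_trans (x y z : G) : aut_equiv x y -> aut_equiv y z -> aut_equiv x z.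
Proof.
  intros [f [[f_hom [f_inj f_surj]] <-]] [g [[g_hom [g_inj g_surj]] <-]].
  exists (fun a => g (f a)). repeat split; auto.
  - intros a b. rewrite f_hom, g_hom. reflexivity.
  - intro c. destruct (g_surj c) as [b <-]. destruct (f_surj b) as [a <-].
    exists a. reflexivity.
Qed.

Lemma aut_equiv_sym (x y : G) : aut_equiv x y -> aut_equiv y x.
Proof.
  intros [f [[f_hom [f_inj f_surj]] <-]].
  set (g := fun b => epsilon (inhabits gone) (fun a => f a = b)).
  assert (fg : forall b, f (g b) = b).
  { intro b. apply epsilon_spec, f_surj. }
  exists g. repeat split.
  - intros a b. apply f_inj. rewrite f_hom, !fg. reflexivity.
  - intros a b gab. rewrite <- (fg a), <- (fg b), gab. reflexivity.
  - intro a. exists (f a). apply f_inj. rewrite fg. reflexivity.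
  - apply f_inj. rewrite fg. reflexivity.
Qed.

End GroupFacts.

Arguments flip_letter {G}.

Lemma hom_one {G H : Grp} (f : G -> H) : is_hom f -> f gone = gone.
Proof.
  intro f_hom. apply (gmul_cancel_l H (f gone)).
  rewrite <- f_hom, gmul_1l, gmul_1r. reflexivity.
Qed.

Lemma hom_inv {G H : Grp} (f : G -> H) (x : G) : is_hom f -> f (ginv x) = ginv (f x).
Proof.
  intro f_hom. apply ginv_unique. rewrite <- f_hom, !gmul_Vr. apply hom_one, f_hom.
Qed.

Lemma quotient_map_eq {G Q : Grp} (N : G -> Prop) (pi : G -> Q) (u v : G) :
  is_quotient_map N pi -> pi u = pi v <-> N (gmul (ginv u) v).
Proof.
  intros [pi_hom [_ pi_ker]].
  rewrite <- pi_ker, pi_hom, hom_inv by exact pi_hom.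
  symmetry. apply gmul_Vl_eq1.
Qed.

Lemma characteristic_aut_iff {G : Grp} (N : G -> Prop) (f : G -> G) (x : G) :
  characteristic N -> is_aut f -> N (f x) <-> N x.
Proof.
  intros [_ N_char] f_aut. rewrite (N_char f f_aut (f x)). split.
  - intros [x' [Nx' fx'x]]. apply f_aut in fx'x. subst x'. exact Nx'.
  - intro Nx. exists x. auto.
Qed.

Lemma characteristic_quotient_aut_equiv {G Q : Grp} (N : G -> Prop) (pi : G -> Q)
  (a b : G) :
  characteristic N -> is_quotient_map N pi ->
  aut_equiv a b -> aut_equiv (pi a) (pi b).
Proof.
  intros N_char pi_quo [f [f_aut fab]].
  pose proof f_aut as [f_hom [_ f_surj]].
  pose proof pi_quo as [pi_hom [pi_surj _]].
  assert (f_compat : forall u v, pi (f u) = pi (f v) <-> pi u = pi v).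
  { intros u v. rewrite !(quotient_map_eq N pi) by exact pi_quo.
    rewrite <- hom_inv, <- f_hom by exact f_hom.
    apply (characteristic_aut_iff N f _ N_char f_aut). }
  set (F := fun q => pi (f (epsilon (inhabits gone) (fun g => pi g = q)))).
  assert (F_pi : forall g, F (pi g) = pi (f g)).
  { intro g. apply f_compat.
    apply (epsilon_spec (inhabits gone) (fun g0 => pi g0 = pi g)). exists g. reflexivity. }
  exists F. repeat split.
  - intros q1 q2. destruct (pi_surj q1) as [g1 <-]. destruct (pi_surj q2) as [g2 <-].
    rewrite <- pi_hom, !F_pi, f_hom, pi_hom. reflexivity.
  - intros q1 q2. destruct (pi_surj q1) as [g1 <-]. destruct (pi_surj q2) as [g2 <-].
    rewrite !F_pi. apply f_compat.
  - intro q. destruct (pi_surj q) as [g <-]. destruct (f_surj g) as [x <-].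
    exists (pi x). apply F_pi.
  - rewrite F_pi, fab. reflexivity.
Qed.

Fixpoint words {G : Grp} (S : list G) (n : nat) : list (list (bool * G)) :=
  match n with
  | 0 => [[]]
  | Datatypes.S n =>
      [] :: flat_map (fun p => map (cons p) (words S n)) (list_prod [true; false] S)
  end.

Lemma in_words {G : Grp} (S : list G) (n : nat) (w : list (bool * G)) :
  In w (words S n) <-> length w <= n /\ Forall (fun p => In (snd p) S) w.
Proof.
  revert w; induction n as [|n IH]; intro w; cbn [words].
  - split.
    + intros [<-|[]]. simpl. auto.
    + intros [lw _]. destruct w; simpl in *; [auto|lia].
  - split.
    + intros [<-|w_in]; [simpl; split; [lia|auto]|].
      apply in_flat_map in w_in. destruct w_in as [[b s] [bs_in w_in]].
      apply in_map_iff in w_in. destruct w_in as [w' [<- w'_in]].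
      apply IH in w'_in. apply in_prod_iff in bs_in.
      simpl. split; [lia|]. constructor; simpl; tauto.
    + intros [lw Sw]. destruct w as [|[b s] w']; [left; reflexivity|right].
      apply in_flat_map. exists (b, s). split.
      * apply in_prod_iff. split; [destruct b; simpl; auto|]. exact (Forall_inv Sw).
      * apply in_map, IH. simpl in lw. split; [lia|]. exact (Forall_inv_tail Sw).
Qed.

Lemma in_ball_finite {G : Grp} (S : list G) (n : nat) :
  exists L : list G, forall g, in_ball S n g <-> In g L.
Proof.
  exists (map word_val (words S n)). intro g. split.
  - intros [w [lw [Sw <-]]]. apply in_map, in_words. auto.
  - intro g_in. apply in_map_iff in g_in. destruct g_in as [w [<- w_in]].
    apply in_words in w_in. exists w. tauto.
Qed.

Lemma exists_transversal {A : Type} (R : A -> A -> Prop)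
  (R_refl : forall x, R x x) (R_sym : forall x y, R x y -> R y x) (L : list A) :
  exists l, incl l L /\ NoDup l /\
    (forall x y, In x l -> In y l -> R x y -> x = y) /\
    (forall y, In y L -> exists x, In x l /\ R y x).
Proof.
  induction L as [|a L IH].
  - exists []. repeat split.
    + intros x [].
    + constructor.
    + intros x y [].
    + intros y [].
  - destruct IH as [l [l_incl [l_nodup [l_sep l_cover]]]].
    destruct (classic (exists x, In x l /\ R a x)) as [a_covered|a_new].
    + exists l. repeat split; auto.
      * intros x x_in. right. auto.
      * intros y [<-|y_in]; auto.
    + exists (a :: l). repeat split.
      * intros x [<-|x_in]; [left|right]; auto.
      * constructor; [intro a_in; apply a_new; eauto|exact l_nodup].
      * intros x y [<-|x_in] [<-|y_in] Rxy; auto; exfalso; apply a_new; eauto.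
      * intros y [<-|y_in].
        -- exists a. split; [left|]; auto.
        -- destruct (l_cover y y_in) as [x [x_in Ryx]]. exists x. split; [right|]; auto.
Qed.

Lemma orbit_reps_exist {G : Grp} (S : list G) (n : nat) : exists l, orbit_reps S n l.
Proof.
  destruct (in_ball_finite S n) as [L ball_L].
  destruct (exists_transversal (@aut_equiv G) (aut_equiv_refl G) (aut_equiv_sym G) L)
    as [l [l_incl [l_nodup [l_sep l_cover]]]].
  exists l. repeat split.
  - intros x x_in. apply ball_L, l_incl, x_in.
  - intros i j i_lt j_lt ij. apply (NoDup_nth l gone); auto.
    apply l_sep; auto; apply nth_In; auto.
  - intros g g_in. apply l_cover, ball_L, g_in.
Qed.

Lemma aut_growth_spec {G : Grp} (S : list G) (n : nat) :
  exists l, orbit_reps S n l /\ length l = aut_growth S n.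
Proof.
  unfold aut_growth. apply epsilon_spec.
  destruct (orbit_reps_exist S n) as [l l_reps]. exists (length l), l. auto.
Qed.

Lemma orbit_reps_sep {G : Grp} (S : list G) (n : nat) (l : list G) (x y : G) :
  orbit_reps S n l -> In x l -> In y l -> aut_equiv x y -> x = y.
Proof.
  intros [_ [l_sep _]] x_in y_in xy.
  destruct (In_nth l x gone x_in) as [i [i_lt <-]].
  destruct (In_nth l y gone y_in) as [j [j_lt <-]].
  f_equal. apply l_sep; auto.
Qed.

Lemma orbit_reps_NoDup {G : Grp} (S : list G) (n : nat) (l : list G) :
  orbit_reps S n l -> NoDup l.
Proof.
  intros [_ [l_sep _]]. apply (NoDup_nth l gone). intros i j i_lt j_lt ij.
  apply l_sep; auto. rewrite ij. apply aut_equiv_refl.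
Qed.

Lemma aut_growth_le_of_lift {G Q : Grp} (pi : G -> Q) (S : list G) (T : list Q)
  (n m : nat) :
  (forall x, in_ball T n x -> exists g, in_ball S m g /\ pi g = x) ->
  (forall a b, aut_equiv a b -> aut_equiv (pi a) (pi b)) ->
  aut_growth T n <= aut_growth S m.
Proof.
  intros lift pi_orbits.
  destruct (aut_growth_spec T n) as [lT [lT_reps <-]].
  destruct (aut_growth_spec S m) as [lS [lS_reps <-]].
  set (h := fun x => epsilon (inhabits gone) (fun y => In y lS /\ aut_equiv x (pi y))).
  assert (h_spec : forall x, In x lT -> In (h x) lS /\ aut_equiv x (pi (h x))).
  { intros x x_in. apply epsilon_spec.
    destruct lT_reps as [lT_ball _]. destruct (lift x (lT_ball x x_in)) as [g [g_ball <-]].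
    destruct lS_reps as [_ [_ lS_cover]]. destruct (lS_cover g g_ball) as [y [y_in gy]].
    exists y. split; auto. }
  rewrite <- (length_map h lT). apply NoDup_incl_length.
  - apply NoDup_map_NoDup_ForallPairs; [|exact (orbit_reps_NoDup T n lT lT_reps)].
    intros a b a_in b_in hab. apply (orbit_reps_sep T n lT); auto.
    destruct (h_spec a a_in) as [_ a_h]. destruct (h_spec b b_in) as [_ b_h].
    rewrite hab in a_h. eapply aut_equiv_trans; [exact a_h|].
    apply aut_equiv_sym. exact b_h.
  - intros y y_in. apply in_map_iff in y_in. destruct y_in as [x [<- x_in]].
    apply h_spec, x_in.
Qed.

Lemma surj_lift_generators {G Q : Grp} (pi : G -> Q) (S : list G) (T : list Q) :
  (forall q, exists g, pi g = q) -> generates S ->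
  exists c, forall t, In t T -> exists g, in_ball S c g /\ pi g = t.
Proof.
  intros pi_surj S_gen. induction T as [|t T [c T_lift]].
  - exists 0. intros t [].
  - destruct (pi_surj t) as [g <-]. destruct (S_gen g) as [k g_ball].
    exists (Nat.max k c). intros t' [<-|t'_in].
    + exists g. split; auto. apply (in_ball_mono _ S k); [lia|exact g_ball].
    + destruct (T_lift t' t'_in) as [g' [g'_ball <-]]. exists g'. split; auto.
      apply (in_ball_mono _ S c); [lia|exact g'_ball].
Qed.

Lemma hom_lift_ball {G Q : Grp} (pi : G -> Q) (S : list G) (T : list Q) (c : nat) :
  is_hom pi ->
  (forall t, In t T -> exists g, in_ball S c g /\ pi g = t) ->
  forall n x, in_ball T n x -> exists g, in_ball S (c * n) g /\ pi g = x.
Proof.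
  intros pi_hom T_lift n x [w [lw [Tw <-]]].
  enough (w_lift : exists g, in_ball S (c * length w) g /\ pi g = word_val w).
  { destruct w_lift as [g [g_ball <-]]. exists g. split; auto.
    apply (in_ball_mono _ S (c * length w)); [nia|exact g_ball]. }
  clear lw. induction w as [|[b t] w IH]; simpl.
  - exists gone. split; [apply in_ball_one|apply hom_one, pi_hom].
  - destruct (IH (Forall_inv_tail Tw)) as [g [g_ball <-]].
    destruct (T_lift t (Forall_inv Tw)) as [h [h_ball <-]].
    assert (letter_lift : exists h', in_ball S c h' /\ pi h' = letter_val (b, pi h)).
    { destruct b; cbn.
      - exists h. auto.
      - exists (ginv h). split; [apply in_ball_inv, h_ball|apply hom_inv, pi_hom]. }
    destruct letter_lift as [h' [h'_ball <-]]. exists (gmul h' g). split.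
    + replace (c * Datatypes.S (length w)) with (c + c * length w) by lia.
      apply in_ball_mul; assumption.
    + apply pi_hom.
Qed.

Theorem mainTheorem13 (G Q : Grp) (N : G -> Prop) (pi : G -> Q)
  (S : list G) (T : list Q) :
  finitely_generated G ->
  characteristic N ->
  is_quotient_map N pi ->
  generates S -> generates T ->
  dom_le (aut_growth T) (aut_growth S).
Proof.
  intros _ N_char pi_quo S_gen _.
  pose proof pi_quo as [pi_hom [pi_surj _]].
  destruct (surj_lift_generators pi S T pi_surj S_gen) as [c T_lift].
  exists (Datatypes.S c). split; [lia|]. intro n.
  enough (aut_growth T n <= aut_growth S (Datatypes.S c * n + Datatypes.S c)) by nia.
  apply (aut_growth_le_of_lift pi).
  - intros x x_ball.
    destruct (hom_lift_ball pi S T c pi_hom T_lift n x x_ball) as [g [g_ball <-]].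
    exists g. split; auto. apply (in_ball_mono _ S (c * n)); [nia|exact g_ball].
  - intros a b. apply (characteristic_quotient_aut_equiv N); assumption.
Qed.
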